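(* Let $(X,\sigma)$ be an $F$-distance space and let $T:X\to X$ be a map such that $\sigma(Tx,Ty)\le\lambda\sigma(x,y)$ for some $\lambda\in[0,1)$ and all $x,y\in X$. Then: (1) for every $x_1\in X$, the sequence $\{x_n\}$ defined by $x_{n+1}=Tx_n$ ($n\in\mathbb N$) is Cauchy in $(X,\sigma)$; (2) if $(X,\sigma)$ is complete, then $T$ has a unique fixed point.
   Context: An $F$-distance on a nonempty set $X$ is a function $\sigma:X\times X\to[0,\infty)$ (not assumed symmetric) such that: $\sigma(x,y)=0$ iff $x=y$; and for every $\varepsilon>0$ there exists $\phi(\varepsilon)>0$ such that for all $x,y,z\in X$, if $\sigma(x,y)\le\phi(\varepsilon)$ and $\sigma(y,z)\le\phi(\varepsilon)$ then $\sigma(x,z)\le\varepsilon$ and $\sigma(z,x)\le\varepsilon$. The pair $(X,\sigma)$ is an $F$-distance space. A sequence $\{x_n\}$ converges to $x$ in $(X,\sigma)$ if $\lim_n\sigma(x_n,x)=0=\lim_n\sigma(x,x_n)$; it is Cauchy if $\lim_{n,m\to\infty}\sigma(x_n,x_m)=0$; $(X,\sigma)$ is complete if every Cauchy sequence converges. *)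

From Stdlib Require Import Reals.
Open Scope R_scope.

Definition is_F_distance {X : Type} (sigma : X -> X -> R) : Prop :=
  (forall x y, 0 <= sigma x y) /\
  (forall x y, sigma x y = 0 <-> x = y) /\
  (forall eps, 0 < eps -> exists phi, 0 < phi /\
     forall x y z, sigma x y <= phi -> sigma y z <= phi ->
       sigma x z <= eps /\ sigma z x <= eps).

Definition F_converges {X : Type} (sigma : X -> X -> R) (x : nat -> X) (l : X) : Prop :=
  Un_cv (fun n => sigma (x n) l) 0 /\ Un_cv (fun n => sigma l (x n)) 0.

Definition F_Cauchy {X : Type} (sigma : X -> X -> R) (x : nat -> X) : Prop :=
  forall eps, 0 < eps -> exists N : nat, forall n m : nat,
    (n >= N)%nat -> (m >= N)%nat -> sigma (x n) (x m) < eps.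

Definition F_complete {X : Type} (sigma : X -> X -> R) : Prop :=
  forall x : nat -> X, F_Cauchy sigma x -> exists l, F_converges sigma x l.

(** The contraction makes the steps [sigma (x n) (x (S n))] of an orbit
    geometrically small.  Since an F-distance has no triangle inequality,
    smallness of the steps controls only chains of a bounded length [m]:
    iterating the phi-condition [m] times gives [sigma (x n) (x (n + m)) <= phi].
    Longer jumps are handled by induction: [x (n + m + k)] is the image under
    [T^m] of [x (n + k)], so [sigma (x (n + m)) (x (n + m + k)) <= lambda^m E],
    which is again [<= phi] once [m] is large; one more phi-step closes the
    induction.  The limit of an orbit is fixed because [sigma l (T l)] is
    squeezed by two phi-small distances, and uniqueness is immediate from
    [sigma p q <= lambda * sigma p q]. *)
From Stdlib Require Import Reals Lra Lia Wf_nat.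
Open Scope R_scope.

Lemma pow_mul_eventually_le (lambda c d : R) :
  0 <= lambda < 1 -> 0 <= c -> 0 < d ->
  exists N : nat, forall n, (n >= N)%nat -> lambda ^ n * c <= d.
Proof.
  intros Hlam Hc Hd.
  assert (Habs : Rabs lambda < 1) by (rewrite Rabs_right; lra).
  destruct (pow_lt_1_zero lambda Habs (d / (c + 1))) as [N HN].
  { apply Rdiv_lt_0_compat; lra. }
  exists N. intros n Hn.
  specialize (HN n Hn).
  assert (Hpow : 0 <= lambda ^ n) by (apply pow_le; lra).
  rewrite Rabs_right in HN by lra.
  apply (Rmult_lt_compat_r (c + 1)) in HN; [|lra].
  unfold Rdiv in HN. rewrite Rmult_assoc, Rinv_l, Rmult_1_r in HN by lra.
  nra.
Qed.

Section FDistance.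

Variables (X : Type) (sigma : X -> X -> R).
Hypothesis Hsigma : is_F_distance sigma.

Lemma Fdist_ge0 x y : 0 <= sigma x y.
Proof. apply (proj1 Hsigma). Qed.

Lemma Fdist_eq0 x y : sigma x y = 0 <-> x = y.
Proof. apply (proj1 (proj2 Hsigma)). Qed.

Lemma Fdist_refl x : sigma x x = 0.
Proof. apply Fdist_eq0; reflexivity. Qed.

Lemma Fdist_phi eps : 0 < eps -> exists phi, 0 < phi /\
  forall x y z, sigma x y <= phi -> sigma y z <= phi ->
    sigma x z <= eps /\ sigma z x <= eps.
Proof. apply (proj2 (proj2 Hsigma)). Qed.

Lemma Fdist_small_sym eps : 0 < eps -> exists delta, 0 < delta /\
  forall x y, sigma x y <= delta -> sigma x y <= eps /\ sigma y x <= eps.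
Proof.
  intros Heps. destruct (Fdist_phi eps Heps) as [phi [Hphi Hphi_tri]].
  exists phi. split; [exact Hphi|]. intros x y Hxy.
  apply (Hphi_tri x y y Hxy). rewrite Fdist_refl. lra.
Qed.

Lemma Fdist_eq_of_le_all x y : (forall eps, 0 < eps -> sigma x y <= eps) -> x = y.
Proof.
  intros Hle. apply Fdist_eq0.
  destruct (Rle_lt_or_eq_dec 0 (sigma x y) (Fdist_ge0 x y)) as [Hpos|Hzero]; [|lra].
  specialize (Hle (sigma x y / 2)). lra.
Qed.

Lemma Fdist_chain M eps : 0 < eps -> exists eta, 0 < eta /\
  forall (x : nat -> X) N, (forall n, (n >= N)%nat -> sigma (x n) (x (S n)) <= eta) ->
  forall n j, (n >= N)%nat -> (j <= M)%nat -> sigma (x n) (x (n + j)%nat) <= eps.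
Proof.
  revert eps. induction M as [|M IH]; intros eps Heps.
  - exists eps. split; [exact Heps|]. intros x N _ n j _ Hj.
    replace (n + j)%nat with n by lia. rewrite Fdist_refl. lra.
  - destruct (Fdist_phi eps Heps) as [phi [Hphi Hphi_tri]].
    destruct (IH (Rmin phi eps)) as [eta' [Heta' Hchain]].
    { apply Rmin_glb_lt; lra. }
    pose proof (Rmin_l phi eps). pose proof (Rmin_r phi eps).
    pose proof (Rmin_l eta' phi). pose proof (Rmin_r eta' phi).
    exists (Rmin eta' phi). split; [apply Rmin_glb_lt; lra|].
    intros x N Hstep n j Hn Hj.
    assert (Hstep' : forall k, (k >= N)%nat -> sigma (x k) (x (S k)) <= eta').
    { intros k Hk. specialize (Hstep k Hk). lra. }
    destruct (Nat.le_gt_cases j M) as [HjM|HjM].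
    + specialize (Hchain x N Hstep' n j Hn HjM). lra.
    + replace j with (S M) by lia. replace (n + S M)%nat with (S (n + M)) by lia.
      pose proof (Hchain x N Hstep' n M Hn (le_n M)) as Hfirst.
      pose proof (Hstep (n + M)%nat ltac:(lia)) as Hlast.
      apply (Hphi_tri (x n) (x (n + M)%nat) (x (S (n + M)))); lra.
Qed.

Section Contraction.

Variables (T : X -> X) (lambda : R).
Hypothesis Hlam : 0 <= lambda < 1.
Hypothesis Hcontr : forall x y, sigma (T x) (T y) <= lambda * sigma x y.

Variable x : nat -> X.
Hypothesis Horbit : forall n, x (S n) = T (x n).

Lemma orbit_contr m a b :
  sigma (x (m + a)%nat) (x (m + b)%nat) <= lambda ^ m * sigma (x a) (x b).
Proof.
  induction m as [|m IH]; simpl; [lra|].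
  rewrite !Horbit. eapply Rle_trans; [apply Hcontr|].
  rewrite Rmult_assoc. apply Rmult_le_compat_l; [lra|exact IH].
Qed.

Lemma orbit_step_small eta : 0 < eta ->
  exists N, forall n, (n >= N)%nat -> sigma (x n) (x (S n)) <= eta.
Proof.
  intros Heta.
  destruct (pow_mul_eventually_le lambda (sigma (x 0%nat) (x 1%nat)) eta Hlam
              (Fdist_ge0 _ _) Heta) as [N HN].
  exists N. intros n Hn.
  pose proof (orbit_contr n 0 1) as Hc.
  rewrite Nat.add_0_r, Nat.add_1_r in Hc.
  specialize (HN n Hn). lra.
Qed.

Lemma orbit_tail_bounded E : 0 < E ->
  exists N, forall k n, (n >= N)%nat -> sigma (x n) (x (n + k)%nat) <= E.
Proof.
  intros HE. destruct (Fdist_phi E HE) as [phi [Hphi Hphi_tri]].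
  destruct (pow_mul_eventually_le lambda E phi Hlam ltac:(lra) Hphi) as [m0 Hm].
  set (m := S m0). specialize (Hm m ltac:(unfold m; lia)).
  destruct (Fdist_chain m (Rmin phi E)) as [eta [Heta Hchain]].
  { apply Rmin_glb_lt; lra. }
  pose proof (Rmin_l phi E). pose proof (Rmin_r phi E).
  destruct (orbit_step_small eta Heta) as [N Hstep].
  exists N. intro k.
  induction k as [k IHk] using (well_founded_induction lt_wf). intros n Hn.
  destruct (Nat.le_gt_cases k m) as [Hkm|Hkm].
  - specialize (Hchain x N Hstep n k Hn Hkm). lra.
  - replace (n + k)%nat with (n + m + (k - m))%nat by lia.
    pose proof (Hchain x N Hstep n m Hn (le_n m)) as Hhead.
    pose proof (IHk (k - m)%nat ltac:(unfold m in *; lia) n Hn) as Hshort.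
    pose proof (orbit_contr m n (n + (k - m))) as Htail.
    replace (m + n)%nat with (n + m)%nat in Htail by lia.
    replace (m + (n + (k - m)))%nat with (n + m + (k - m))%nat in Htail by lia.
    assert (0 <= lambda ^ m) by (apply pow_le; lra).
    assert (lambda ^ m * sigma (x n) (x (n + (k - m))%nat) <= lambda ^ m * E)
      by (apply Rmult_le_compat_l; assumption).
    apply (Hphi_tri (x n) (x (n + m)%nat) (x (n + m + (k - m))%nat)); lra.
Qed.

Lemma orbit_Cauchy : F_Cauchy sigma x.
Proof.
  intros eps Heps.
  destruct (Fdist_small_sym (eps / 2)) as [delta [Hdelta Hsym]]; [lra|].
  destruct (orbit_tail_bounded delta Hdelta) as [N Htail].
  exists N. intros n p Hn Hp.
  destruct (Nat.le_gt_cases n p) as [Hnp|Hpn].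
  - specialize (Htail (p - n)%nat n Hn). replace (n + (p - n))%nat with p in Htail by lia.
    destruct (Hsym _ _ Htail). lra.
  - specialize (Htail (n - p)%nat p Hp). replace (p + (n - p))%nat with n in Htail by lia.
    destruct (Hsym _ _ Htail). lra.
Qed.

Lemma orbit_limit_fixed l : F_converges sigma x l -> T l = l.
Proof.
  intros [Hto Hfrom]. symmetry. apply Fdist_eq_of_le_all.
  intros eps Heps. destruct (Fdist_phi eps Heps) as [phi [Hphi Hphi_tri]].
  destruct (Hfrom phi Hphi) as [N1 HN1].
  destruct (Hto phi Hphi) as [N2 HN2].
  set (n := Nat.max N1 N2).
  pose proof (HN1 (S n) ltac:(unfold n; lia)) as Hl_xn.
  pose proof (HN2 n ltac:(unfold n; lia)) as Hxn_l.
  unfold R_dist in Hl_xn, Hxn_l. rewrite Rminus_0_r in Hl_xn, Hxn_l.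
  rewrite Rabs_right in Hl_xn, Hxn_l by (apply Rle_ge, Fdist_ge0).
  pose proof (Hcontr (x n) l) as Hstep. rewrite <- Horbit in Hstep.
  pose proof (Fdist_ge0 (x n) l).
  apply (Hphi_tri l (x (S n)) (T l)); nra.
Qed.

End Contraction.

Lemma contraction_fixed_unique (T : X -> X) (lambda : R) :
  lambda < 1 -> (forall x y, sigma (T x) (T y) <= lambda * sigma x y) ->
  forall p q, T p = p -> T q = q -> p = q.
Proof.
  intros Hlam Hcontr p q Hp Hq. apply Fdist_eq0.
  pose proof (Hcontr p q) as Hpq. rewrite Hp, Hq in Hpq.
  pose proof (Fdist_ge0 p q). nra.
Qed.

End FDistance.

Theorem mainTheorem2 (X : Type) (sigma : X -> X -> R) (T : X -> X) (lambda : R)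
  (HX : inhabited X) (Hsigma : is_F_distance sigma)
  (Hlam : 0 <= lambda < 1)
  (Hcontr : forall x y, sigma (T x) (T y) <= lambda * sigma x y) :
  (forall (x : nat -> X), (forall n, x (S n) = T (x n)) -> F_Cauchy sigma x) /\
  (F_complete sigma -> exists! p : X, T p = p).
Proof.
  pose proof (orbit_Cauchy X sigma Hsigma T lambda Hlam Hcontr) as Hcauchy.
  pose proof (orbit_limit_fixed X sigma Hsigma T lambda Hlam Hcontr) as Hlimit_fixed.
  split; [exact Hcauchy|].
  intros Hcomplete. destruct HX as [x0].
  set (x := fun n => Nat.iter n T x0).
  assert (Horbit : forall n, x (S n) = T (x n)) by reflexivity.
  destruct (Hcomplete x (Hcauchy x Horbit)) as [l Hlim].
  pose proof (Hlimit_fixed x Horbit l Hlim) as Hl.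
  exists l. split; [exact Hl|].
  intros q Hq.
  exact (contraction_fixed_unique X sigma Hsigma T lambda (proj2 Hlam) Hcontr l q Hl Hq).
Qed.
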